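(* Let $R$ be the ring of $2$-adic integers, $G=A_4$, $H=\langle a_1,a_2\rangle$ with $a_1=(1,2)(3,4)$, $a_2=(1,4)(2,3)$. Let $\delta_1,\delta_2,\delta_3$ be the linear characters of $H$ given by $\delta_1(a_1)=-1,\delta_1(a_2)=1$; $\delta_2(a_1)=1,\delta_2(a_2)=-1$; $\delta_3(a_1)=\delta_3(a_2)=-1$, viewed as rank-one $RH$-modules. Then each induced $R$-representation $\delta_i^G$ ($i=1,2,3$) of $G$ is irreducible and equivalent to the representation $\Gamma_2$ afforded by $M_2$. Moreover $\Gamma_2$ is equivalent to the monomial representation $a_1\mapsto\operatorname{diag}(-1,1,-1)$, $b\mapsto\left(\begin{smallmatrix}0&0&1\\1&0&0\\0&1&0\end{smallmatrix}\right)$ where $b=(1,2,3)$.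
   Context: Let $L$ be the free $R$-module with basis $e_1,\dots,e_4$ on which $G$ acts by permuting indices; $L_2=\{\sum\alpha_je_j:\alpha_j\in R,\ \sum\alpha_j\equiv0\pmod 2\}$, $L_0=R(e_1+e_2+e_3+e_4)$, $M_2=L_2/L_0$, an $RG$-module free of rank $3$ over $R$; $\Gamma_2$ is the $R$-representation it affords. Two $R$-representations are equivalent if their modules are isomorphic. *)

From HB Require Import structures.
From mathcomp Require Import all_boot all_order all_algebra all_fingroup all_solvable all_character.
Set Implicit Arguments. Unset Strict Implicit. Unset Printing Implicit Defensive.
Import GRing.Theory.
Local Open Scope ring_scope.

(* ---------- The ring of 2-adic integers, via its defining inverse-limit
   property: R is (isomorphic to) lim_n Z/2^(n+1). ---------- *)
Definition is_2adic_integers (R : comNzRingType) : Prop :=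
  exists pi : forall n : nat, R -> 'Z_(2 ^ n.+1),
    [/\ (forall n, pi n 1 = 1),
        (forall n x y, pi n (x + y) = pi n x + pi n y),
        (forall n x y, pi n (x * y) = pi n x * pi n y),
        (forall n x, ((pi n.+1 x : nat) %% 2 ^ n.+1)%N = (pi n x : nat)) &
        (forall s : forall n : nat, 'Z_(2 ^ n.+1),
            (forall n, ((s n.+1 : nat) %% 2 ^ n.+1)%N = (s n : nat)) ->
            exists! x : R, forall n, pi n x = s n)].

(* ---------- The group A_4 acting on {1,2,3,4} = 'I_4 (index k <-> k+1) ---------- *)
Definition o0 : 'I_4 := @Ordinal 4 0 isT.
Definition o1 : 'I_4 := @Ordinal 4 1 isT.
Definition o2 : 'I_4 := @Ordinal 4 2 isT.
Definition o3 : 'I_4 := @Ordinal 4 3 isT.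

Definition A4 : {group {perm 'I_4}} := ('Alt_('I_4))%G.
(* a1 = (1,2)(3,4), a2 = (1,4)(2,3), b = (1,2,3) (i.e. 1->2->3->1) *)
Definition a1 : {perm 'I_4} := (tperm o0 o1 * tperm o2 o3)%g.
Definition a2 : {perm 'I_4} := (tperm o0 o3 * tperm o1 o2)%g.
Definition b3 : {perm 'I_4} := (tperm o1 o2 * tperm o0 o1)%g.
Definition V4 : {group {perm 'I_4}} := (<<[set a1; a2]>>)%G.

(* ---------- Induced representation (row-vector / right-module convention,
   as in mathcomp's mx_representation: v |-> v *m rho g).
   For a right transversal t (G = disjoint union of H t_i), the module
   R_delta (x)_{RH} RG has R-basis 1 (x) t_i, and
   (1 (x) t_i) g = delta(t_i g t_j^-1) (1 (x) t_j)  when t_i g t_j^-1 \in H. *)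
Definition is_rtransversal (gT : finGroupType) (G H : {group gT}) (n : nat)
    (t : 'I_n -> gT) : Prop :=
  (forall i, t i \in G) /\
  (forall x, x \in G -> exists! i, x \in (H :* t i)%g).

Definition ind_mx (R : nzRingType) (gT : finGroupType) (H : {set gT}) (n : nat)
    (delta : gT -> R) (t : 'I_n -> gT) (g : gT) : 'M[R]_n :=
  \matrix_(i, j)
     (if (t i * g * (t j)^-1)%g \in H then delta (t i * g * (t j)^-1)%g else 0).

Definition lin_char_on (R : nzRingType) (gT : finGroupType) (H : {set gT})
    (delta : gT -> R) : Prop :=
  delta 1%g = 1 /\ {in H &, forall x y, delta (x * y)%g = delta x * delta y}.

Definition irreducible_over_frac (R : idomainType) (gT : finGroupType)
    (G : {group gT}) (n : nat) (rho : gT -> 'M[R]_n) : Prop :=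
  exists hr : mx_repr G (fun g => map_mx (@tofrac R) (rho g)),
    mx_irreducible (MxRepresentation hr).

Definition is_mx_repr (R : comUnitRingType) (gT : finGroupType)
   (G : {group gT}) (n : nat) (rho : gT -> 'M[R]_n) : Prop := mx_repr G rho.

(* L = R^4 (row vectors), G acting by permuting indices: e_j . g = e_{g j}. *)
Definition inL2 (R : nzRingType) (v : 'rV[R]_4) : Prop :=
  exists r : R, \sum_(j < 4) v 0 j = 2 * r.
Definition inL0 (R : nzRingType) (v : 'rV[R]_4) : Prop :=
  exists c : R, v = c *: const_mx 1.

(* (R^3, rho) is isomorphic, as an RG-module, to M_2 = L_2/L_0:
   there is an R-linear map L_2 -> R^3 that is onto, has kernel exactly L_0
   and is G-equivariant.  (This is a module isomorphism M_2 ~ (R^3,rho).) *)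
Definition equiv_to_Gamma2 (R : comNzRingType) (G : {group {perm 'I_4}})
    (rho : {perm 'I_4} -> 'M[R]_3) : Prop :=
  exists phi : 'rV[R]_4 -> 'rV[R]_3,
    [/\ (forall (a : R) u v, inL2 u -> inL2 v -> phi (a *: u + v) = a *: phi u + phi v),
        (forall w, exists2 u, inL2 u & phi u = w),
        (forall u, inL2 u -> (phi u = 0 <-> inL0 u)) &
        (forall g u, g \in G -> inL2 u -> phi (u *m perm_mx g) = phi u *m rho g)].

Definition diag_a1 (R : nzRingType) : 'M[R]_3 :=
  \matrix_(i, j) (if i == j then (if (i : nat) == 1%N then 1 else -1) else 0).
(* [[0,0,1],[1,0,0],[0,1,0]] *)
Definition cyc_b (R : nzRingType) : 'M[R]_3 :=
  \matrix_(i, j) (if (j : nat) == (((i : nat) + 2) %% 3)%N then 1 else 0).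

From HB Require Import structures.
From mathcomp Require Import all_boot all_order all_algebra all_fingroup all_solvable all_character.
From mathcomp Require Import ring.
From Stdlib Require Import ClassicalEpsilon.
Import GRing.Theory.
Set Implicit Arguments. Unset Strict Implicit. Unset Printing Implicit Defensive.
Local Open Scope ring_scope.

(* V4 is a normal subgroup of A4 with quotient of order 3, and
   conjugation by A4 permutes transitively the three nontrivial characters of
   V4.  Hence the matrices of the induced representation δ^G are monomial, and
   on V4 they are diagonal with the three distinct characters conjugate to δ on
   the diagonal.  Averaging a vector of a submodule against one of these
   characters isolates a coordinate vector, and the transversal moves it to the
   other two: δ^G is irreducible over any field in which 2 is invertible.
   For the equivalence with M_2 = L_2/L_0, the vector fixed by the stabiliser of
   a point yields, by Frobenius reciprocity, an intertwiner S : R^4 -> R^3 with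
   entries ±1 and mutually orthogonal columns of norm 4 and sum 0.  Then
   u |-> uS/2 is well defined on L_2, equivariant and onto, and its kernel is
   L_0 because the 4 x 4 matrix [1 | S] is invertible up to the factor 4.  The
   monomial form of Γ2 is δ^G for δ = (a1 |-> -1, a2 |-> 1) and the transversal
   (1, b^2, b). *)

Section InducedMatrix.
Variables (R : comUnitRingType) (gT : finGroupType) (G H : {group gT}) (n : nat).
Variables (delta : gT -> R) (t : 'I_n -> gT).
Hypotheses (delta_lin : lin_char_on H delta) (tG : is_rtransversal G H t).
Local Notation rho := (ind_mx H delta t).

Lemma rtransversal_unique i x : x \in G -> exists! j, (t i * x * (t j)^-1 \in H)%g.
Proof.
move=> xG; have [j [Hj j_uniq]] := tG.2 _ (groupM (tG.1 i) xG).
by exists j; split=> [|k]; rewrite -mem_rcoset // => /j_uniq.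
Qed.

Lemma rtransversal_inj j k : (t j * (t k)^-1 \in H)%g -> j = k.
Proof.
have [l [_ l_uniq]] := rtransversal_unique j (group1 G).
by move=> Hk; rewrite -(l_uniq k) ?mulg1 // -(l_uniq j) // mulg1 mulgV group1.
Qed.

Lemma ind_mx_row i x : x \in G ->
  exists2 j, (t i * x * (t j)^-1 \in H)%g &
    row i (rho x) = delta (t i * x * (t j)^-1)%g *: 'e_j.
Proof.
move=> xG; have [j [Hj j_uniq]] := rtransversal_unique i xG.
exists j => //; apply/rowP => k; rewrite !mxE.
case: (eqVneq k j) => [->|kj]; first by rewrite Hj eqxx /= mulr1n mulr1.
rewrite andbF mulr0n mulr0; case: ifP => // /j_uniq jk.
by rewrite jk eqxx in kj.
Qed.

Lemma ind_mx_repr : mx_repr G rho.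
Proof.
split=> [|x y xG yG].
  apply/row_matrixP => i; have [j Hj ->] := ind_mx_row i (group1 G).
  rewrite mulg1 in Hj *; rewrite -(rtransversal_inj Hj) mulgV delta_lin.1 scale1r.
  by rewrite row1.
apply/row_matrixP => i; rewrite row_mul.
have [j Hj ->] := ind_mx_row i xG; rewrite -scalemxAl -rowE.
apply/rowP => k; rewrite !mxE.
have -> : (t i * (x * y) * (t k)^-1 = (t i * x * (t j)^-1) * (t j * y * (t k)^-1))%g.
  by rewrite !mulgA mulgKV.
by rewrite groupMl //; case: ifP => [Hk | _]; rewrite ?mulr0 // delta_lin.2.
Qed.

Lemma row_ind_mx_transversal j k : row j (rho ((t j)^-1 * t k)%g) = 'e_k.
Proof.
have xG : ((t j)^-1 * t k \in G)%g by rewrite groupM ?groupV ?tG.1.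
have [l Hl ->] := ind_mx_row j xG; move: Hl; rewrite mulgA mulgV mul1g => Hl.
by rewrite -(rtransversal_inj Hl) mulgV delta_lin.1 scale1r.
Qed.

Hypothesis nsHG : (H <| G)%g.

Lemma ind_mx_normal h : h \in H ->
  rho h = diag_mx (\row_i delta (h ^ (t i)^-1)%g).
Proof.
move=> hH; apply/row_matrixP => i; rewrite row_diag_mx mxE.
have hG : h \in G := subsetP (normal_sub nsHG) h hH.
have [j Hj ->] := ind_mx_row i hG.
have conjE : (t i * h * (t i)^-1 = h ^ (t i)^-1)%g by rewrite conjgE invgK mulgA.
have Hi : (t i * h * (t i)^-1 \in H)%g.
  by rewrite conjE memJ_norm // groupV (subsetP (normal_norm nsHG)) ?tG.1.
have [l [_ l_uniq]] := rtransversal_unique i hG.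
by rewrite -(l_uniq j) // (l_uniq i) // conjE.
Qed.

Lemma rtransversal_coset_mulV i j x y :
    (t i * x * (t j)^-1 \in H)%g -> (t i * y * (t j)^-1 \in H)%g -> (x * y^-1 \in H)%g.
Proof.
move=> Hx Hy; have tiN : ((t i)^-1 \in 'N(H))%g.
  by rewrite groupV (subsetP (normal_norm nsHG)) ?tG.1.
rewrite -(memJ_norm _ tiN).
have -> : ((x * y^-1) ^ (t i)^-1 = (t i * x * (t j)^-1) * (t i * y * (t j)^-1)^-1)%g.
  by rewrite conjgE invgK !invMg invgK !mulgA mulgKV.
by rewrite groupM ?groupV.
Qed.

End InducedMatrix.

Lemma map_ind_mx (R S : nzRingType) (f : {rmorphism R -> S}) (gT : finGroupType)
    (H : {set gT}) n (delta : gT -> R) (t : 'I_n -> gT) g :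
  map_mx f (ind_mx H delta t g) = ind_mx H (f \o delta) t g.
Proof. by apply/matrixP => i j; rewrite !mxE; case: ifP; rewrite ?rmorph0. Qed.

Lemma lin_char_on_rmorph (R S : nzRingType) (f : {rmorphism R -> S}) (gT : finGroupType)
    (H : {set gT}) (delta : gT -> R) :
  lin_char_on H delta -> lin_char_on H (f \o delta).
Proof.
by case=> delta1 deltaM; split=> [|x y xH yH]; rewrite /= ?delta1 ?deltaM ?rmorph1 ?rmorphM.
Qed.

Lemma is_rtransversal_of_cover (gT : finGroupType) (G H : {group gT}) n (t : 'I_n -> gT) :
    (forall i, t i \in G) -> (forall i j, (t i * (t j)^-1 \in H)%g -> i = j) ->
    (forall x, x \in G -> exists i, (x * (t i)^-1 \in H)%g) ->
  is_rtransversal G H t.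
Proof.
move=> tG t_inj t_cover; split=> // x /t_cover[i Hi]; exists i.
split=> [|j]; rewrite mem_rcoset // => Hj; apply: t_inj.
have -> : (t i * (t j)^-1 = (x * (t i)^-1)^-1 * (x * (t j)^-1))%g.
  by rewrite invMg invgK !mulgA mulgKV.
by rewrite groupM ?groupV.
Qed.

Section DomainMatrices.
Variable R : idomainType.

Lemma scalemxI m n (a : R) : a != 0 -> injective (fun A : 'M[R]_(m, n) => a *: A).
Proof.
move=> a_neq0 A B /eqP; rewrite -subr_eq0 -scalerBr scalemx_eq0 (negbTE a_neq0).
by rewrite subr_eq0 => /eqP.
Qed.

Lemma mulmx_scalarC n (A B : 'M[R]_n) c : c != 0 -> A *m B = c%:M -> B *m A = c%:M.
Proof.
move=> c_neq0 AB; have detA_neq0 : \det A != 0.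
  apply: contra c_neq0 => /eqP detA0; have := congr1 determinant AB.
  by rewrite det_mulmx detA0 mul0r det_scalar => /esym/eqP; rewrite expf_eq0 => /andP[].
have : A *m (B *m A - c%:M) = 0.
  by rewrite mulmxBr mulmxA AB mul_scalar_mx mul_mx_scalar subrr.
move/(congr1 (mulmx (\adj A))); rewrite mulmxA mul_adj_mx mulmx0 mul_scalar_mx.
by move/eqP; rewrite scalemx_eq0 (negbTE detA_neq0) subr_eq0 => /eqP.
Qed.

End DomainMatrices.

Section SignIntertwiner.
Variables (R : idomainType) (G : {group {perm 'I_4}}) (rho : {perm 'I_4} -> 'M[R]_3).
Variable S : 'M[R]_(4, 3).
Hypotheses (two_neq0 : (2 : R) != 0) (S_sign : forall k j, S k j = 1 \/ S k j = -1).
Hypotheses (S_col_sum : forall j, \sum_k S k j = 0) (S_orth : S^T *m S = 4%:M).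
Hypothesis S_intertwines : forall g, g \in G -> perm_mx g *m S = S *m rho g.

(* [halve x] is meaningful only for [x] in [2 R]. *)
Definition halve (x : R) : R := epsilon (inhabits 0) (fun r => x = 2 * r).

Lemma halveE x r : x = 2 * r -> halve x = r.
Proof.
move=> xE; have := epsilon_spec (inhabits 0) (fun r => x = 2 * r) (ex_intro _ r xE).
by rewrite -/(halve x) xE => /(mulfI two_neq0).
Qed.

Definition Gamma2_map (u : 'rV[R]_4) : 'rV[R]_3 := map_mx halve (u *m S).

Lemma Gamma2_mapE u w : u *m S = 2 *: w -> Gamma2_map u = w.
Proof. by move=> uSE; apply/rowP => j; rewrite mxE uSE mxE (halveE (erefl _)). Qed.

Lemma oppr1_neq1 : (-1 : R) != 1.
Proof. by apply: contra two_neq0 => /eqP E; rewrite -[2]/(1 + 1 : R) -{1}E addNr. Qed.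

Lemma sign_mx_even u : inL2 u -> u *m S = 2 *: Gamma2_map u.
Proof.
case=> r sum_u; pose E := \matrix_(k, j) (if S k j == 1 then 0 else -1 : R).
have SE : S = const_mx 1 + 2 *: E.
  apply/matrixP => k j; rewrite !mxE.
  by case: (S_sign k j) => ->; rewrite ?eqxx ?(negbTE oppr1_neq1); ring.
have uSE : u *m S = 2 *: (const_mx r + u *m E).
  rewrite {1}SE mulmxDr -scalemxAr scalerDr; congr (_ + _).
  by apply/rowP => j; rewrite !mxE -sum_u; apply: eq_bigr => k _; rewrite mxE mulr1.
by rewrite (Gamma2_mapE uSE).
Qed.

Lemma Gamma2_map_linear a u v : inL2 u -> inL2 v ->
  Gamma2_map (a *: u + v) = a *: Gamma2_map u + Gamma2_map v.
Proof.
move=> /sign_mx_even uS /sign_mx_even vS; apply: Gamma2_mapE.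
by rewrite mulmxDl -scalemxAl uS vS scalerDr !scalerA mulrC.
Qed.

Lemma Gamma2_map_equivariant g u : g \in G -> inL2 u ->
  Gamma2_map (u *m perm_mx g) = Gamma2_map u *m rho g.
Proof.
move=> gG /sign_mx_even uS; apply: Gamma2_mapE.
by rewrite -mulmxA S_intertwines // mulmxA uS -scalemxAl.
Qed.

Lemma const_mulmx_sign_mx m : (const_mx 1 : 'M[R]_(m, 4)) *m S = 0.
Proof.
by apply/matrixP => i j; rewrite !mxE -[RHS](S_col_sum j); apply: eq_bigr => k _;
  rewrite mxE mul1r.
Qed.

Lemma Gamma2_map_onto w : exists2 u, inL2 u & Gamma2_map u = w.
Proof.
pose D := \matrix_(k, j) (if S k j == 1 then 1 else 0 : R).
have DE : 2 *: D = const_mx 1 + S.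
  apply/matrixP => k j; rewrite !mxE.
  by case: (S_sign k j) => ->; rewrite ?eqxx ?(negbTE oppr1_neq1); ring.
have DtS : D^T *m S = 2%:M.
  apply: (scalemxI two_neq0); rewrite scalemxAl -linearZ /= DE linearD /= mulmxDl.
  by rewrite trmx_const const_mulmx_sign_mx S_orth add0r scale_scalar_mx -natrM.
exists (w *m D^T); last by apply: Gamma2_mapE; rewrite -mulmxA DtS mul_mx_scalar.
exists (\sum_j w 0 j).
have sumD j : \sum_k D k j = 2.
  apply: (mulfI two_neq0); rewrite big_distrr /=.
  transitivity (\sum_(k < 4) (1 + S k j)); first by apply: eq_bigr => k _;
    have := congr1 (fun A : 'M[R]_(4, 3) => A k j) DE; rewrite !mxE.
  by rewrite big_split /= S_col_sum addr0 sumr_const card_ord -natrM.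
rewrite big_distrr /=; under eq_bigr do rewrite mxE.
rewrite exchange_big /=; apply: eq_bigr => j _.
by rewrite -(sumD j) mulrC big_distrr; apply: eq_bigr => k _; rewrite mxE.
Qed.

Lemma sign_mx_ker u : u *m S = 0 -> inL0 u.
Proof.
(* With N = [1 | S] we have N^T N = 4, hence N N^T = 4 and 4 u = u N N^T = (Σ u) 1. *)
move=> uS0; pose N : 'M[R]_(4, 1 + 3) := row_mx (const_mx 1) S.
have four_neq0 : (4 : R) != 0 by rewrite (natrM R 2 2) mulf_neq0.
have NtN : N^T *m N = 4%:M.
  rewrite tr_row_mx mul_col_row trmx_const const_mulmx_sign_mx S_orth.
  rewrite -[S^T *m _]trmxK trmx_mul trmxK trmx_const const_mulmx_sign_mx trmx0.
  rewrite (scalar_mx_block 1 3); congr block_mx.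
  apply/matrixP => i j; rewrite !ord1 !mxE eqxx mulr1n.
  by under eq_bigr do rewrite !mxE mulr1; rewrite sumr_const card_ord.
have fourE : 4 *: u = const_mx (\sum_k u 0 k).
  rewrite -mul_mx_scalar -(mulmx_scalarC four_neq0 NtN) mulmxA mul_mx_row uS0.
  rewrite tr_row_mx mul_row_col mul0mx addr0 trmx_const.
  apply/rowP => k; rewrite !mxE big_ord1 !mxE mulr1.
  by apply: eq_bigr => i _; rewrite mxE mulr1.
have fourEk k : 4 * u 0 k = \sum_i u 0 i.
  by have := congr1 (fun v : 'rV[R]_4 => v 0 k) fourE; rewrite !mxE.
exists (u 0 0); apply/rowP => k; rewrite !mxE mulr1.
by apply: (mulfI four_neq0); rewrite fourEk fourEk.
Qed.

Lemma Gamma2_map_kernel u : inL2 u -> (Gamma2_map u = 0 <-> inL0 u).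
Proof.
move=> /sign_mx_even uS; split=> [phi0 | [c uE]].
  by apply: sign_mx_ker; rewrite uS phi0 scaler0.
by apply: Gamma2_mapE; rewrite uE -scalemxAl const_mulmx_sign_mx !scaler0.
Qed.

Lemma equiv_to_Gamma2_sign_mx : equiv_to_Gamma2 G rho.
Proof.
exists Gamma2_map; split.
- exact: Gamma2_map_linear.
- exact: Gamma2_map_onto.
- exact: Gamma2_map_kernel.
- by move=> g u; apply: Gamma2_map_equivariant.
Qed.

End SignIntertwiner.

Lemma ord3_cover (i1 i2 i3 j : 'I_3) :
  i1 != i2 -> i1 != i3 -> i2 != i3 -> [|| j == i1, j == i2 | j == i3].
Proof. by case: i1 i2 i3 j => [[|[|[|//]]] ?] [[|[|[|//]]] ?] [[|[|[|//]]] ?] [[|[|[|//]]] ?]. Qed.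

Lemma signed_units_entry (R : nzRingType) (i1 i2 i3 j : 'I_3) (d1 d2 d3 : R) :
  i1 != i2 -> i1 != i3 -> i2 != i3 ->
  (d1 *: 'e_i1 + d2 *: 'e_i2 + d3 *: 'e_i3 : 'rV[R]_3) 0 j \in [:: d1; d2; d3].
Proof.
move=> n12 n13 n23; rewrite !mxE !eqxx /=.
case/or3P: (ord3_cover j n12 n13 n23) => /eqP->; rewrite eqxx ?(eq_sym i2) ?(eq_sym i3)
  ?(negbTE n12) ?(negbTE n13) ?(negbTE n23) /= ?mulr1n ?mulr0n ?mulr0 ?mulr1 ?addr0 ?add0r;
  by rewrite !inE eqxx ?orbT.
Qed.

Definition klein_char (gT : finGroupType) (p h : gT) : int :=
  if (h == 1)%g || (h == p) then 1 else -1.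

Lemma klein_char_sign (gT : finGroupType) (p h : gT) :
  klein_char p h = 1 \/ klein_char p h = -1.
Proof. by rewrite /klein_char; case: ifP; [left | right]. Qed.

Lemma klein_charJ (gT : finGroupType) (p h y : gT) :
  klein_char p (h ^ y^-1)%g = klein_char (p ^ y)%g h.
Proof. by rewrite /klein_char conjg_eq1 (canF_eq (conjgKV y)). Qed.

Section PermutationsOfFour.
Local Open Scope group_scope.

Definition a3 : {perm 'I_4} := a1 * a2.
(* The 3-cycle (2,4,3), which generates the stabiliser of o0 in A4. *)
Definition cyc0 : {perm 'I_4} := a3 * b3.

(* Permutations of ['I_4] are compared through their lists of values, on which
   [vm_compute] can evaluate products. *)
Definition perm4_code (p : {perm 'I_4}) : seq nat :=
  [seq val (p i) | i <- [:: o0; o1; o2; o3]].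

Lemma ord4P (x : 'I_4) : [\/ x = o0, x = o1, x = o2 | x = o3].
Proof.
by case: x => -[|[|[|[|//]]]] lt_x4; [constructor 1|constructor 2|constructor 3|
  constructor 4]; apply/val_inj.
Qed.

Lemma eq_perm4_code (p q : {perm 'I_4}) : (p == q) = (perm4_code p == perm4_code q).
Proof.
apply/eqP/eqP => [-> // | [E0 E1 E2 E3]].
by apply/permP => x; apply/val_inj; case: (ord4P x) => ->.
Qed.

Lemma perm4_code_val (p : {perm 'I_4}) (x : 'I_4) :
  val (p x) = nth 0%N (perm4_code p) x.
Proof. by case: (ord4P x) => ->. Qed.

Lemma perm4_codeM (p q : {perm 'I_4}) :
  perm4_code (p * q) = [seq nth 0%N (perm4_code q) i | i <- perm4_code p].
Proof. by rewrite /perm4_code /= !permM !perm4_code_val. Qed.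

Lemma perm4_codeV (p : {perm 'I_4}) :
  perm4_code p^-1 = [seq index (val i) (perm4_code p) | i <- [:: o0; o1; o2; o3]].
Proof.
have uniq_p : uniq (perm4_code p) by rewrite map_inj_uniq // => i j /val_inj/perm_inj.
by apply/eq_map => i; rewrite -{2}(permKV p i) (perm4_code_val p) index_uniq.
Qed.

Lemma perm4_code1 : perm4_code 1 = [:: 0; 1; 2; 3]%N.
Proof. by rewrite /perm4_code /= !perm1. Qed.

Lemma perm4_code_tperm (x y : 'I_4) :
  perm4_code (tperm x y) =
    [seq val ([fun z => z with x |-> y, y |-> x] i) | i <- [:: o0; o1; o2; o3]].
Proof. by rewrite /perm4_code /= !permE. Qed.

Lemma perm4_code_a1 : perm4_code a1 = [:: 1; 0; 3; 2]%N.
Proof. by rewrite perm4_codeM !perm4_code_tperm; vm_compute. Qed.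

Lemma perm4_code_a2 : perm4_code a2 = [:: 3; 2; 1; 0]%N.
Proof. by rewrite perm4_codeM !perm4_code_tperm; vm_compute. Qed.

Lemma perm4_code_b3 : perm4_code b3 = [:: 1; 2; 0; 3]%N.
Proof. by rewrite perm4_codeM !perm4_code_tperm; vm_compute. Qed.

Lemma perm4_code_a3 : perm4_code a3 = [:: 2; 3; 0; 1]%N.
Proof. by rewrite perm4_codeM perm4_code_a1 perm4_code_a2. Qed.

Lemma perm4_code_cyc0 : perm4_code cyc0 = [:: 0; 3; 1; 2]%N.
Proof. by rewrite perm4_codeM perm4_code_a3 perm4_code_b3. Qed.

End PermutationsOfFour.

Ltac perm4_eval :=
  rewrite ?conjgE ?eq_perm4_code ?(perm4_code1, perm4_code_a1, perm4_code_a2,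
    perm4_code_b3, perm4_code_a3, perm4_code_cyc0, perm4_codeV, perm4_codeM); vm_compute.

Section KleinFourInA4.
Local Open Scope group_scope.

Lemma V4_group_set : group_set [set 1; a1; a2; a3].
Proof.
apply/group_setP; split; first by rewrite !inE eqxx.
by move=> x y; rewrite !inE -!orbA => /or4P[] /eqP-> /or4P[] /eqP->; perm4_eval.
Qed.

Lemma V4E : V4 = [set 1; a1; a2; a3] :> {set _}.
Proof.
apply/eqP; rewrite eqEsubset -{1}(gen_set_id V4_group_set) genS; last first.
  by apply/subsetP => x; rewrite !inE => /orP[] ->; rewrite ?orbT.
apply/subsetP => x; rewrite !inE -!orbA => /or4P[] /eqP->; rewrite ?group1 //.
- by rewrite mem_gen // !inE eqxx.
- by rewrite mem_gen // !inE eqxx orbT.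
- by rewrite groupM // mem_gen // !inE eqxx ?orbT.
Qed.

Lemma inV4 x : (x \in V4) = [|| x == 1, x == a1, x == a2 | x == a3].
Proof. by rewrite V4E !inE -!orbA. Qed.

Lemma even_perm_A4 x : ~~ odd_perm x -> x \in A4.
Proof. by rewrite /A4 /= Alt_even. Qed.

Lemma V4_sub_A4 : V4 \subset A4.
Proof.
apply/subsetP => x; rewrite inV4 => /or4P[] /eqP-> //; apply: even_perm_A4;
  by rewrite /a3 /a1 /a2 ?odd_permM !odd_tperm.
Qed.

Lemma b3_A4 : b3 \in A4.
Proof. by rewrite even_perm_A4 // odd_permM !odd_tperm. Qed.

Lemma cyc0_A4 : cyc0 \in A4.
Proof. by rewrite groupM ?b3_A4 // (subsetP V4_sub_A4) // inV4 eqxx !orbT. Qed.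

Lemma V4_invg x : x \in V4 -> x^-1 = x.
Proof. by rewrite inV4 => /or4P[] /eqP->; apply/eqP; perm4_eval. Qed.

Lemma V4_abelian : abelian V4.
Proof.
apply/centsP => x + y; rewrite !inV4 => /or4P[] /eqP-> /or4P[] /eqP->;
  by apply/eqP; perm4_eval.
Qed.

Lemma V4_conj_id x y : x \in V4 -> y \in V4 -> x ^ y = x.
Proof. by move=> xV yV; apply/conjg_fixP/commgP/(centsP V4_abelian). Qed.

Lemma A4_fix_o0 p : p \in A4 -> p o0 = o0 -> [\/ p = 1, p = cyc0 | p = cyc0 * cyc0].
Proof.
move=> pA p0; have uniq_p : uniq (perm4_code p).
  by rewrite map_inj_uniq // => i j /val_inj/perm_inj.
have /or4P[|||/or3P[||/orP[|//]]] : perm4_code p \in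
    [:: [:: 0; 1; 2; 3]; [:: 0; 3; 1; 2]; [:: 0; 2; 3; 1];
        [:: 0; 2; 1; 3]; [:: 0; 3; 2; 1]; [:: 0; 1; 3; 2]]%N.
  move: uniq_p; rewrite /perm4_code /= p0.
  by case: (p o1) => [[|[|[|[|?]]]] ?] //; case: (p o2) => [[|[|[|[|?]]]] ?] //;
    case: (p o3) => [[|[|[|[|?]]]] ?].
- by move/eqP=> p_id; constructor 1; apply/eqP; rewrite eq_perm4_code p_id perm4_code1.
- by move/eqP=> p_c; constructor 2; apply/eqP; rewrite eq_perm4_code p_c perm4_code_cyc0.
- move/eqP=> p_cc; constructor 3; apply/eqP.
  by rewrite eq_perm4_code p_cc perm4_codeM perm4_code_cyc0.
all: move/eqP=> p_odd; move: pA; rewrite /A4 /= Alt_even.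
- suff -> : p = tperm o1 o2 by rewrite odd_tperm.
  by apply/eqP; rewrite eq_perm4_code perm4_code_tperm p_odd.
- suff -> : p = tperm o1 o3 by rewrite odd_tperm.
  by apply/eqP; rewrite eq_perm4_code perm4_code_tperm p_odd.
- suff -> : p = tperm o2 o3 by rewrite odd_tperm.
  by apply/eqP; rewrite eq_perm4_code perm4_code_tperm p_odd.
Qed.

Definition v4_to (k : 'I_4) : {perm 'I_4} :=
  match val k with 0%N => 1 | 1%N => a1 | 2%N => a3 | _ => a2 end.

Lemma v4_to_V4 k : v4_to k \in V4.
Proof. by rewrite inV4 /v4_to; case: (ord4P k) => ->; rewrite eqxx ?orbT. Qed.

Lemma v4_to_o0 k : v4_to k o0 = k.
Proof.
apply/val_inj; rewrite perm4_code_val /v4_to.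
by case: (ord4P k) => ->; rewrite ?perm4_code1 ?perm4_code_a1 ?perm4_code_a3 ?perm4_code_a2.
Qed.

Lemma A4_V4_cosets x : x \in A4 ->
  exists2 h, h \in V4 & [\/ x = h, x = cyc0 * h | x = cyc0 * cyc0 * h].
Proof.
move=> xA; set h := v4_to (x o0); have hV : h \in V4 := v4_to_V4 _.
have xhA : x * h \in A4 by rewrite groupM // (subsetP V4_sub_A4).
have xh_o0 : (x * h) o0 = o0.
  by rewrite permM -{1}(v4_to_o0 (x o0)) -permM -/h -{1}(V4_invg hV) mulVg perm1.
exists h => //; have -> : x = x * h * h by rewrite -mulgA -{2}(V4_invg hV) mulgV mulg1.
by case: (A4_fix_o0 xhA xh_o0) => ->; [constructor 1; rewrite mul1g | constructor 2 |
  constructor 3].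
Qed.

Lemma cyc0_norm_V4 : cyc0 \in 'N(V4).
Proof.
apply/normP/eqP; rewrite eqEcard cardJg leqnn andbT.
apply/subsetP => y; rewrite mem_conjg -{2}(conjgKV cyc0 y).
by move: (y ^ cyc0^-1) => z; rewrite !inV4 => /or4P[] /eqP->; perm4_eval.
Qed.

Lemma V4_normal : V4 <| A4.
Proof.
rewrite /normal V4_sub_A4; apply/subsetP => x /A4_V4_cosets[h hV].
have hN : h \in 'N(V4) := subsetP (normG V4) h hV.
have cyc0N := cyc0_norm_V4.
by case=> ->; [exact: hN | exact: groupM cyc0N hN | exact: groupM (groupM cyc0N cyc0N) hN].
Qed.

Lemma V4_conj x h : x \in A4 -> h \in V4 -> h ^ x \in V4.
Proof. by move=> xA hV; rewrite memJ_norm // (subsetP (normal_norm V4_normal)). Qed.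

Lemma V4_conj_neq x p : x \in A4 -> x \notin V4 -> p \in V4 -> p != 1 -> p ^ x != p.
Proof.
move=> /A4_V4_cosets[h hV [->|->|->]]; first by rewrite hV.
- move=> _ pV; rewrite conjgM (V4_conj_id (V4_conj cyc0_A4 pV) hV).
  by move: pV; rewrite inV4 => /or4P[] /eqP->; perm4_eval.
- move=> _ pV; rewrite conjgM (V4_conj_id (V4_conj (groupM cyc0_A4 cyc0_A4) pV) hV).
  by move: pV; rewrite inV4 => /or4P[] /eqP->; perm4_eval.
Qed.

End KleinFourInA4.

Lemma V4_setD1 p : (p \in V4^#)%g = [|| p == a1, p == a2 | p == a3].
Proof.
by rewrite in_setD1 inV4; case: (eqVneq p 1%g) => [->|]; perm4_eval.
Qed.

Lemma sum_ord4 (V : nmodType) (F : 'I_4 -> V) :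
  \sum_(k < 4) F k = F o0 + F o1 + F o2 + F o3.
Proof.
rewrite !big_ord_recl big_ord0 addr0 !addrA.
by congr (_ + _ + _ + _); congr F; apply/val_inj.
Qed.

Lemma klein_char_sum p : (p \in V4^#)%g -> \sum_(k < 4) klein_char p (v4_to k) = 0.
Proof. by rewrite V4_setD1 sum_ord4 => /or3P[] /eqP->; rewrite /klein_char; perm4_eval. Qed.

Lemma klein_char_orthogonal p q : (p \in V4^#)%g -> (q \in V4^#)%g ->
  \sum_(k < 4) klein_char p (v4_to k) * klein_char q (v4_to k) = (p == q)%:R * 4.
Proof.
by rewrite !V4_setD1 sum_ord4 => /or3P[] /eqP-> /or3P[] /eqP->; rewrite /klein_char; perm4_eval.
Qed.

Lemma V4_neqE :
  (((a1 == 1%g) = false) * ((a2 == 1%g) = false) * ((a3 == 1%g) = false) *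
   ((a1 == a2) = false) * ((a1 == a3) = false) * ((a2 == a1) = false) *
   ((a2 == a3) = false) * ((a3 == a1) = false) * ((a3 == a2) = false))%type.
Proof. by do ! split; perm4_eval. Qed.

Lemma V4_lin_char (R : idomainType) (delta : {perm 'I_4} -> R) :
  lin_char_on V4 delta ->
  [\/ delta a1 = -1 /\ delta a2 = 1, delta a1 = 1 /\ delta a2 = -1 |
      delta a1 = -1 /\ delta a2 = -1] ->
  exists2 p, (p \in V4^#)%g & {in V4, forall h, delta h = (klein_char p h)%:~R}.
Proof.
move=> [delta1 deltaM] values.
have delta3 : delta a3 = delta a1 * delta a2 by apply: deltaM; rewrite inV4 eqxx ?orbT.
case: values => [[d1 d2]|[d1 d2]|[d1 d2]]; [exists a2 | exists a1 | exists a3];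
  rewrite ?V4_setD1 ?eqxx ?orbT // => h; rewrite inV4 => /or4P[] /eqP->;
  by rewrite /klein_char ?eqxx ?V4_neqE /= ?intrN mulr1z ?delta1 ?delta3 ?d1 ?d2
    ?mulN1r ?mul1r ?opprK.
Qed.

Section InducedKleinCharacter.
Variables (R : idomainType) (delta : {perm 'I_4} -> R) (t : 'I_3 -> {perm 'I_4}).
Variable p : {perm 'I_4}.
Hypotheses (delta_lin : lin_char_on V4 delta) (tA : is_rtransversal A4 V4 t).
Hypotheses (pV : (p \in V4^#)%g) (deltaE : {in V4, forall h, delta h = (klein_char p h)%:~R}).
Local Notation rho := (ind_mx V4 delta t).

Definition pt j := (p ^ t j)%g.

Lemma pt_V4 j : (pt j \in V4^#)%g.
Proof.
move: pV; rewrite !in_setD1 conjg_eq1 => /andP[-> p_V4].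
exact: V4_conj (tA.1 j) p_V4.
Qed.

Lemma pt_inj : injective pt.
Proof.
move=> j k pt_jk; move: pV; rewrite in_setD1 => /andP[p_neq1 p_V4].
have tjkA : (t j * (t k)^-1 \in A4)%g by rewrite groupM ?groupV ?tA.1.
apply: (rtransversal_inj tA); apply: contraT => tjk_notV4.
have := V4_conj_neq tjkA tjk_notV4 p_V4 p_neq1.
by rewrite conjgM -/(pt j) pt_jk conjgK eqxx.
Qed.

Lemma ind_mx_V4 h : h \in V4 ->
  rho h = diag_mx (\row_j (klein_char (pt j) h)%:~R).
Proof.
move=> hV; rewrite (ind_mx_normal delta tA V4_normal hV).
by congr diag_mx; apply/rowP => j; rewrite !mxE deltaE ?klein_charJ // V4_conj ?groupV ?tA.1.
Qed.

Lemma mulmx_ind_mx_V4 (r : 'rV[R]_3) h : h \in V4 ->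
  r *m rho h = \row_j (r 0 j * (klein_char (pt j) h)%:~R).
Proof. by move=> hV; rewrite ind_mx_V4 // mul_mx_diag; apply/rowP => j; rewrite !mxE. Qed.

Lemma sum_klein_char_pt j j' :
  \sum_(k < 4) (klein_char (pt j) (v4_to k) * klein_char (pt j') (v4_to k))%:~R =
    (j == j')%:R * 4 :> R.
Proof.
rewrite -rmorph_sum klein_char_orthogonal ?pt_V4 // (inj_eq pt_inj).
by rewrite rmorphM /= !rmorphMn /= rmorph1.
Qed.

(* The orbit sum of the first basis vector under the stabiliser <[cyc0]> of o0. *)
Definition fixed_vec : 'rV[R]_3 := row 0 (rho 1 + rho cyc0 + rho (cyc0 * cyc0))%g.

Lemma delta_sign h : h \in V4 -> delta h = 1 \/ delta h = -1.
Proof.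
move=> hV; rewrite deltaE //.
by case: (klein_char_sign p h) => ->; [left; rewrite mulr1z | right; rewrite intrN mulr1z].
Qed.

Lemma fixed_vec_sign j : fixed_vec 0 j = 1 \/ fixed_vec 0 j = -1.
Proof.
have cyc0cyc0A : (cyc0 * cyc0 \in A4)%g by rewrite groupM ?cyc0_A4.
have [j1 H1 row_cyc0] := ind_mx_row delta tA 0 cyc0_A4.
have [j2 H2 row_cyc0cyc0] := ind_mx_row delta tA 0 cyc0cyc0A.
have H0 : (t 0 * 1 * (t 0)^-1 \in V4)%g by rewrite mulg1 mulgV group1.
have coset_neq x y i : (t 0 * x * (t i)^-1 \in V4)%g -> (t 0 * y * (t i)^-1 \in V4)%g ->
    (x * y^-1 \notin V4)%g -> False.
  by move=> Hx Hy; rewrite (rtransversal_coset_mulV tA V4_normal Hx Hy).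
have n01 : (0 : 'I_3) != j1.
  by apply/eqP=> j10; rewrite -j10 in H1; apply: (coset_neq _ _ _ H0 H1); rewrite inV4; perm4_eval.
have n02 : (0 : 'I_3) != j2.
  by apply/eqP=> j20; rewrite -j20 in H2; apply: (coset_neq _ _ _ H0 H2); rewrite inV4; perm4_eval.
have n12 : j1 != j2.
  by apply/eqP=> j12; rewrite -j12 in H2; apply: (coset_neq _ _ _ H1 H2); rewrite inV4; perm4_eval.
have : fixed_vec 0 j \in [:: 1; delta (t 0 * cyc0 * (t j1)^-1)%g;
                              delta (t 0 * (cyc0 * cyc0) * (t j2)^-1)%g].
  have := signed_units_entry j 1 (delta (t 0 * cyc0 * (t j1)^-1)%g)
    (delta (t 0 * (cyc0 * cyc0) * (t j2)^-1)%g) n01 n02 n12.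
  rewrite scale1r /fixed_vec !linearD /= row_cyc0 row_cyc0cyc0.
  by rewrite (ind_mx_repr delta_lin tA).1 row1.
by rewrite !inE => /or3P[] /eqP->; [left | apply: delta_sign | apply: delta_sign].
Qed.

Lemma fixed_vec_cyc0 : fixed_vec *m rho cyc0 = fixed_vec.
Proof.
have [rho1 rhoM] := ind_mx_repr delta_lin tA.
have A1 : (1 \in A4)%g := group1 A4.
have cyc0cyc0A : (cyc0 * cyc0 \in A4)%g := groupM cyc0_A4 cyc0_A4.
have cyc0_3 : (cyc0 * cyc0 * cyc0 = 1)%g by apply/eqP; perm4_eval.
rewrite -row_mul !mulmxDl -!rhoM ?cyc0_A4 // mul1g cyc0_3.
by rewrite /fixed_vec addrC addrA.
Qed.

Lemma fixed_vec_stab y : y \in A4 -> y o0 = o0 -> fixed_vec *m rho y = fixed_vec.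
Proof.
have [rho1 rhoM] := ind_mx_repr delta_lin tA.
move=> yA /(A4_fix_o0 yA) [->|->|->]; first by rewrite rho1 mulmx1.
  exact: fixed_vec_cyc0.
by rewrite rhoM ?cyc0_A4 // mulmxA !fixed_vec_cyc0.
Qed.

Definition intertwiner : 'M[R]_(4, 3) :=
  \matrix_(k, j) (fixed_vec 0 j * (klein_char (pt j) (v4_to k))%:~R).

Lemma intertwinerE k j :
  intertwiner k j = fixed_vec 0 j * (klein_char (pt j) (v4_to k))%:~R.
Proof. by rewrite mxE. Qed.

Lemma row_intertwiner k : row k intertwiner = fixed_vec *m rho (v4_to k).
Proof. by rewrite mulmx_ind_mx_V4 ?v4_to_V4 //; apply/rowP => j; rewrite !mxE. Qed.

Lemma intertwiner_perm g : g \in A4 -> perm_mx g *m intertwiner = intertwiner *m rho g.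
Proof.
have [_ rhoM] := ind_mx_repr delta_lin tA.
have xA k : v4_to k \in A4 := subsetP V4_sub_A4 _ (v4_to_V4 k).
move=> gA; apply/row_matrixP => k; rewrite !row_mul row_intertwiner.
have -> : row k (perm_mx g) = 'e_(g k) :> 'rV[R]_4.
  by apply/rowP => i; rewrite !mxE eqxx eq_sym.
rewrite -rowE row_intertwiner -mulmxA -rhoM ?xA //.
set y := (v4_to k * g * (v4_to (g k))^-1)%g.
have yA : y \in A4 by rewrite !groupM ?groupV ?xA.
have y_o0 : y o0 = o0 by rewrite !permM v4_to_o0 -{2}(v4_to_o0 (g k)) permK.
have -> : (v4_to k * g = y * v4_to (g k))%g by rewrite mulgKV.
by rewrite rhoM ?xA // mulmxA (fixed_vec_stab yA y_o0).
Qed.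

Lemma intertwiner_sign k j : intertwiner k j = 1 \/ intertwiner k j = -1.
Proof.
rewrite intertwinerE; case: (fixed_vec_sign j) => ->;
  case: (klein_char_sign (pt j) (v4_to k)) => ->;
  rewrite ?intrN mulr1z ?mulr1 ?mul1r ?mulN1r ?opprK; by [left | right].
Qed.

Lemma intertwiner_col_sum j : \sum_k intertwiner k j = 0.
Proof.
under eq_bigr do rewrite intertwinerE.
by rewrite -big_distrr /= -rmorph_sum klein_char_sum ?pt_V4 // mulr0.
Qed.

Lemma intertwiner_orth : intertwiner^T *m intertwiner = 4%:M.
Proof.
apply/matrixP => j j'; rewrite mxE [RHS]mxE.
under eq_bigr do rewrite mxE !intertwinerE mulrACA -intrM.
rewrite -big_distrr /= sum_klein_char_pt //.
case: eqVneq => [<-|_] /=; last by ring.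
by case: (fixed_vec_sign j) => ->; ring.
Qed.

Hypothesis two_neq0 : (2 : R) != 0.

Lemma ind_klein_equiv : equiv_to_Gamma2 A4 rho.
Proof.
exact: equiv_to_Gamma2_sign_mx two_neq0 intertwiner_sign intertwiner_col_sum
  intertwiner_orth intertwiner_perm.
Qed.

End InducedKleinCharacter.

Section Irreducibility.
Variables (F : fieldType) (delta : {perm 'I_4} -> F) (t : 'I_3 -> {perm 'I_4}).
Variables (p : {perm 'I_4}) (rho : {perm 'I_4} -> 'M[F]_3).
Hypotheses (two_neq0 : (2 : F) != 0) (delta_lin : lin_char_on V4 delta).
Hypotheses (tA : is_rtransversal A4 V4 t) (pV : (p \in V4^#)%g).
Hypothesis deltaE : {in V4, forall h, delta h = (klein_char p h)%:~R}.
Hypothesis rhoE : rho =1 ind_mx V4 delta t.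

Lemma ind_klein_irr (rG : mx_repr A4 rho) : mx_irreducible (MxRepresentation rG).
Proof.
apply/mx_irrP; split=> // U modU U_neq0.
have U_stable x W : x \in A4 -> (W <= U)%MS -> (W *m ind_mx V4 delta t x <= U)%MS.
  move=> xA WU; rewrite -rhoE; apply: submx_trans (submxMr _ WU) _.
  exact: (mxmoduleP modU x xA).
have /existsP[i0 r_neq0] : [exists i, row i U != 0].
  apply: contraR U_neq0 => /existsPn rows0; apply/eqP/row_matrixP => i.
  by rewrite row0; apply/eqP/negbNE/rows0.
set r := row i0 U; have /existsP[j0 rj0] : [exists j, r 0 j != 0].
  apply: contraR r_neq0 => /existsPn r0; apply/eqP/rowP => j.
  by rewrite [RHS]mxE; apply/eqP/negbNE/r0.
pose E := \sum_(k < 4) (klein_char (pt t p j0) (v4_to k))%:~R *: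
  (r *m ind_mx V4 delta t (v4_to k)).
have EU : (E <= U)%MS.
  by apply: summx_sub => k _; rewrite scalemx_sub // U_stable ?row_sub //
    (subsetP V4_sub_A4) ?v4_to_V4.
have E_e : E = (4 * r 0 j0) *: 'e_j0.
  apply/rowP => j; rewrite summxE.
  under eq_bigr do rewrite (mulmx_ind_mx_V4 tA deltaE) ?v4_to_V4 // !mxE mulrCA -intrM.
  rewrite -mulr_sumr (sum_klein_char_pt _ tA pV) !mxE eqxx /=.
  by case: eqVneq => [<-|_] /=; ring.
have four_neq0 : (4 : F) != 0 by rewrite (natrM F 2 2) mulf_neq0.
have e_j0U : (('e_j0 : 'rV[F]_3) <= U)%MS.
  have -> : 'e_j0 = (4 * r 0 j0)^-1 *: E :> 'rV[F]_3.
    by rewrite E_e scalerA mulVf ?scale1r // mulf_neq0.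
  exact: scalemx_sub.
rewrite -sub1mx; apply/row_subP => k.
rewrite row1 -(row_ind_mx_transversal delta_lin tA j0 k) rowE.
by apply: U_stable; rewrite // groupM ?groupV ?tA.1.
Qed.

End Irreducibility.

Lemma klein_char_a2_lin : lin_char_on V4 (klein_char a2).
Proof.
split=> [|x y]; first by rewrite /klein_char eqxx.
by rewrite !inV4 => /or4P[] /eqP-> /or4P[] /eqP->; rewrite /klein_char; perm4_eval.
Qed.

(* Ordered so that [b3] permutes the cosets V4, V4 b3^2, V4 b3 as the matrix [cyc_b]. *)
Definition b3_transversal (i : 'I_3) : {perm 'I_4} :=
  match val i with 0%N => 1%g | 1%N => (b3 * b3)%g | _ => b3 end.

Lemma b3_transversal_A4 : is_rtransversal A4 V4 b3_transversal.
Proof.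
apply: is_rtransversal_of_cover.
- case=> [[|[|[|//]]] ?]; rewrite /b3_transversal /=;
    [exact: group1 | exact: groupM b3_A4 b3_A4 | exact: b3_A4].
- by case=> [[|[|[|//]]] ?] [[|[|[|//]]] ?]; rewrite /b3_transversal /= inV4; perm4_eval;
    by [| move=> _; apply: val_inj].
move=> x /A4_V4_cosets[h hV [->|->|->]];
  [exists (@Ordinal 3 0 isT) | exists (@Ordinal 3 2 isT) | exists (@Ordinal 3 1 isT)];
  by move: hV; rewrite /b3_transversal /= !inV4 => /or4P[] /eqP->; perm4_eval.
Qed.

Lemma map_diag_a1 (R S : nzRingType) (f : {rmorphism R -> S}) :
  map_mx f (diag_a1 R) = diag_a1 S.
Proof.
apply/matrixP => i j; rewrite !mxE; case: eqP => _; last exact: rmorph0.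
by case: eqP => _; rewrite ?rmorphN rmorph1.
Qed.

Lemma map_cyc_b (R S : nzRingType) (f : {rmorphism R -> S}) :
  map_mx f (cyc_b R) = cyc_b S.
Proof. by apply/matrixP => i j; rewrite !mxE; case: eqP => _; rewrite ?rmorph0 ?rmorph1. Qed.

Lemma ind_mx_b3_transversal_a1 :
  ind_mx V4 (klein_char a2) b3_transversal a1 = diag_a1 int.
Proof.
apply/matrixP => i j; rewrite !mxE.
by case: i j => [[|[|[|//]]] ?] [[|[|[|//]]] ?]; rewrite /b3_transversal /= inV4 /klein_char;
  perm4_eval.
Qed.

Lemma ind_mx_b3_transversal_b3 :
  ind_mx V4 (klein_char a2) b3_transversal b3 = cyc_b int.
Proof.
apply/matrixP => i j; rewrite !mxE.
by case: i j => [[|[|[|//]]] ?] [[|[|[|//]]] ?]; rewrite /b3_transversal /= inV4 /klein_char;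
  perm4_eval.
Qed.

Lemma is_2adic_integers_two_neq0 (R : comNzRingType) : is_2adic_integers R -> (2 : R) != 0.
Proof.
case=> pi [pi1 piD _ _ _]; apply/eqP => two0.
have pi0 : pi 1%N 0 = 0.
  by have := piD 1%N 0 0; rewrite addr0 => /eqP; rewrite eq_sym -subr_eq0 addrK => /eqP.
by have := piD 1%N 1 1; rewrite -[1 + 1]/(2 : R) two0 pi0 pi1.
Qed.

Lemma ind_klein_irreducible_over_frac (R : idomainType) (delta : {perm 'I_4} -> R)
    (t : 'I_3 -> {perm 'I_4}) (p : {perm 'I_4}) :
    (2 : R) != 0 -> lin_char_on V4 delta -> is_rtransversal A4 V4 t -> (p \in V4^#)%g ->
    {in V4, forall h, delta h = (klein_char p h)%:~R} ->
  irreducible_over_frac A4 (ind_mx V4 delta t).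
Proof.
move=> two_neq0 delta_lin tA pV deltaE.
pose deltaF := @tofrac R \o delta.
have deltaF_lin : lin_char_on V4 deltaF := lin_char_on_rmorph _ delta_lin.
have rhoE g : map_mx (@tofrac R) (ind_mx V4 delta t g) = ind_mx V4 deltaF t g.
  exact: map_ind_mx.
have [rho1 rhoM] := ind_mx_repr deltaF_lin tA.
have rG : mx_repr A4 (fun g => map_mx (@tofrac R) (ind_mx V4 delta t g)).
  by split=> [|x y xA yA]; rewrite !rhoE ?rho1 ?rhoM.
exists rG; apply: (ind_klein_irr _ deltaF_lin tA pV) => // [|h hV].
  by rewrite -(rmorph_nat (@tofrac R)) tofrac_eq0.
by rewrite /deltaF /= deltaE // rmorph_int.
Qed.

Theorem mainTheorem6 (R : idomainType) (hR : is_2adic_integers R) :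
  (forall delta : {perm 'I_4} -> R,
     lin_char_on V4 delta ->
     [\/ delta a1 = -1 /\ delta a2 = 1,
         delta a1 = 1 /\ delta a2 = -1 |
         delta a1 = -1 /\ delta a2 = -1] ->
     forall t : 'I_3 -> {perm 'I_4}, is_rtransversal A4 V4 t ->
       irreducible_over_frac A4 (ind_mx V4 delta t) /\
       equiv_to_Gamma2 A4 (ind_mx V4 delta t))
  /\
  (exists mu : {perm 'I_4} -> 'M[R]_3,
     [/\ is_mx_repr A4 mu, mu a1 = diag_a1 R, mu b3 = cyc_b R &
         equiv_to_Gamma2 A4 mu]).
Proof.
have two_neq0 := is_2adic_integers_two_neq0 hR.
split=> [delta delta_lin values t tA | ].
  have [p pV deltaE] := V4_lin_char delta_lin values.
  split; first exact: ind_klein_irreducible_over_frac two_neq0 delta_lin tA pV deltaE.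
  exact: ind_klein_equiv delta_lin tA pV deltaE two_neq0.
have delta0_lin := lin_char_on_rmorph (intr : {rmorphism int -> R}) klein_char_a2_lin.
have a2V : (a2 \in V4^#)%g by rewrite V4_setD1 eqxx orbT.
exists (ind_mx V4 (intr \o klein_char a2) b3_transversal); split.
- exact: ind_mx_repr delta0_lin b3_transversal_A4.
- by rewrite -map_ind_mx ind_mx_b3_transversal_a1 map_diag_a1.
- by rewrite -map_ind_mx ind_mx_b3_transversal_b3 map_cyc_b.
- exact: ind_klein_equiv delta0_lin b3_transversal_A4 a2V (fun h _ => erefl) two_neq0.
Qed.
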